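(* The VCCR $isc$ does not refine Split Cycle (there is a linear profile $\mathbf P$ with $sc(\mathbf P)\not\subseteq isc(\mathbf P)$), and $isc$ fails Positive Involvement in Defeat. Moreover, the VSCC $ISC=\overline{isc}$ fails Tolerant Positive Involvement.
   Context: Profiles: $\mathbf P:V\to\mathcal L(X)$, $V$ nonempty finite set of voters, $X=X(\mathbf P)$ nonempty finite set of candidates, $\mathcal L(X)$ strict linear orders. $\mathrm{Margin}_{\mathbf P}(x,y)$ = #voters ranking $x$ above $y$ minus #ranking $y$ above $x$; $x$ majority preferred to $y$ if $>0$. $\mathcal M(\mathbf P)$: directed graph on $X(\mathbf P)$ with edge $x\to y$ of weight $\mathrm{Margin}_{\mathbf P}(x,y)$ when positive; majority paths are paths in it, the strength of a path being its minimum edge weight. $(x,y)\in sc(\mathbf P)$ iff $\mathrm{Margin}_{\mathbf P}(x,y)>0$ exceeds the strength of every majority path from $y$ to $x$. Ignore-source strength: for a simple path $\rho$ from $a$ to $b$, $\mathrm{Strength}^{is}(\rho)$ is the minimum weight of edges of $\rho$ not starting at $a$ (minimum of the empty set is $\infty$); $\mathrm{Strength}^{is}(a,b)$ is the maximum over majority paths $\rho$ from $a$ to $b$ (maximum of the empty set is $0$). $(x,y)\in isc(\mathbf P)$ iff $\mathrm{Margin}_{\mathbf P}(x,y)>\mathrm{Strength}^{is}(y,x)$; $ISC(\mathbf P)$ = set of candidates not defeated in $isc(\mathbf P)$. Positive Involvement in Defeat (VCCR $f$): if $(x,y)\notin f(\mathbf P)$ and $\mathbf P'$ adds one new voter ranking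 $y$ above $x$, then $(x,y)\notin f(\mathbf P')$. Tolerant Positive Involvement (VSCC $F$): if $x\in F(\mathbf P)$ and $\mathbf P'$ adds one new voter ranking $x$ above every other candidate $y$ to which $x$ is not majority preferred in $\mathbf P$, then $x\in F(\mathbf P')$. *)

From mathcomp Require Import all_boot all_order all_algebra.
Set Implicit Arguments. Unset Strict Implicit. Unset Printing Implicit Defensive.
Import Order.TTheory GRing.Theory Num.Theory.
Local Open Scope ring_scope.

Section Voting.
Variable X : finType.

(* A ballot is a strict linear order on the candidates: [R x y] = x ranked above y. *)
Definition is_linear (R : rel X) : Prop :=
  [/\ irreflexive R, transitive R & forall x y, x != y -> R x y || R y x].

Definition is_profile (V : finType) (P : V -> rel X) : Prop :=
  (0 < #|V|)%N /\ (0 < #|X|)%N /\ forall v, is_linear (P v).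

Definition margin (V : finType) (P : V -> rel X) (x y : X) : int :=
  (#|[set v | P v x y]|%:Z - #|[set v | P v y x]|%:Z).

Definition add_voter (V : finType) (P : V -> rel X) (b : rel X) : option V -> rel X :=
  fun o => if o is Some v then P v else b.

(* Extended integers: [None] stands for +infinity. *)
Fixpoint min_ext (s : seq int) : option int :=
  match s with
  | [::] => None
  | k :: s' => Some (if min_ext s' is Some m then Num.min k m else k)
  end.

Definition max_ext (a b : option int) : option int :=
  match a, b with
  | Some m, Some n => Some (Num.max m n)
  | _, _ => None
  end.

Definition gt_ext (m : int) (s : option int) : bool :=
  if s is Some k then k < m else false.

Section Prof.
Variables (V : finType) (P : V -> rel X).

(* A simple majority path from a to b, given by its vertices after a. *)
Definition majority_path (a b : X) (p : seq X) : bool :=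
  [&& path (fun u v => 0 < margin P u v) a p, uniq (a :: p) & last a p == b].

Definition edges (a : X) (p : seq X) : seq (X * X) := zip (a :: p) p.

Definition strength (a : X) (p : seq X) : option int :=
  min_ext [seq margin P e.1 e.2 | e <- edges a p].

Definition strength_is (a : X) (p : seq X) : option int :=
  min_ext [seq margin P e.1 e.2 | e <- edges a p & e.1 != a].

Definition all_uniq_seqs : seq (seq X) :=
  flatten [seq permutations (enum A) | A : {set X}].

(* Strength^is(a,b): maximum over majority paths (max of empty set = 0). *)
Definition Strength_is (a b : X) : option int :=
  \big[max_ext/Some 0]_(p <- undup all_uniq_seqs | majority_path a b p) strength_is a p.

Definition sc (x y : X) : Prop :=
  0 < margin P x y /\
  forall p, majority_path y x p -> gt_ext (margin P x y) (strength y p).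

Definition isc (x y : X) : Prop := gt_ext (margin P x y) (Strength_is y x).

Definition ISC (x : X) : Prop := forall y, ~ isc y x.

End Prof.
End Voting.

From mathcomp Require Import all_boot all_order all_algebra ring.
Import Order.TTheory GRing.Theory Num.Theory.
Local Open Scope ring_scope.

(* In the seven-voter profile P below the majority graph is the cycle
   b -1-> a -3-> c -3-> b.  The path b a c has strength 1 < 3, so c defeats b
   in sc; ignoring its source edge its strength is 3, which blocks the isc
   defeat, and b is undefeated in isc.  The extra ballot a > b > c puts b above
   c, the only candidate b is not majority preferred to, yet it cancels the edge
   b -> a: b is left with no outgoing majority edge, so no path protects it any
   more and c defeats b in isc. *)

Definition le_ext (s t : option int) : bool :=
  match s, t with
  | _, None => true
  | None, Some _ => false
  | Some m, Some n => m <= n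
  end.

Lemma le_ext_trans {s t u} : le_ext s t -> le_ext t u -> le_ext s u.
Proof. by case: s t u => [m|] [k|] [n|] //=; apply: le_trans. Qed.

Lemma le_ext_maxl s t : le_ext s (max_ext s t).
Proof. by case: s t => [m|] [n|] //=; rewrite le_max lexx. Qed.

Lemma le_ext_maxr s t : le_ext t (max_ext s t).
Proof. by case: s t => [m|] [n|] //=; rewrite le_max lexx orbT. Qed.

Lemma le_ext_bigmax {T : eqType} (r : seq T) (q : pred T) (F : T -> option int) i :
  i \in r -> q i -> le_ext (F i) (\big[max_ext/Some 0]_(j <- r | q j) F j).
Proof.
elim: r => //= j r IHr; rewrite in_cons big_cons => /predU1P[<- -> | ri qi].
  exact: le_ext_maxl.
by case: (q j); [apply: le_ext_trans (IHr ri qi) (le_ext_maxr _ _) | apply: IHr].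
Qed.

Lemma min_ext_le_head (k : int) s : le_ext (min_ext (k :: s)) (Some k).
Proof. by rewrite /=; case: (min_ext s) => [m|] /=; rewrite ?ge_min lexx. Qed.

Lemma gt_ext_le_lt (m k : int) s : le_ext s (Some k) -> k < m -> gt_ext m s.
Proof. by case: s => [n|] //= /le_lt_trans; apply. Qed.

Lemma gt_extE (m : int) s : gt_ext m s = ~~ le_ext (Some m) s.
Proof. by case: s => [n|] //=; rewrite ltNge. Qed.

Lemma card_set_option {T : finType} (q : pred (option T)) :
  #|[set o | q o]| = (q None + #|[set t | q (Some t)]|)%N.
Proof. by rewrite !cardsE !cardE /enum_mem !size_filter [in LHS]unlock /= count_map. Qed.

Lemma card_set_nth {T : Type} (x0 : T) (s : seq T) (q : pred T) :
  #|[set i : 'I_(size s) | q (nth x0 s i)]| = count q s.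
Proof.
rewrite cardsE cardE /enum_mem size_filter -enumT.
by rewrite -[in RHS](mkseq_nth x0 s) /mkseq -val_enum_ord -map_comp count_map.
Qed.

Section Ballots.
Context {X : finType}.

Definition ranking (s : seq X) : rel X := fun x y => (index x s < index y s)%N.

Lemma ranking_linear (s : seq X) : (forall x, x \in s) -> is_linear (ranking s).
Proof.
move=> sX; split=> [x | y x z | x y]; rewrite /ranking ?ltnn //; first exact: ltn_trans.
move=> neq_xy; rewrite -neq_ltn; apply: contra_neq neq_xy => eq_index.
by rewrite -(nth_index x (sX x)) eq_index nth_index.
Qed.

Definition profile_of (bs : seq (seq X)) : 'I_(size bs) -> rel X :=
  fun v => ranking (nth [::] bs v).

Definition ballot_margin (bs : seq (seq X)) (x y : X) : int :=
  (count (fun s => ranking s x y) bs)%:Z - (count (fun s => ranking s y x) bs)%:Z.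

Lemma margin_profile_of bs x y : margin (profile_of bs) x y = ballot_margin bs x y.
Proof.
rewrite /margin (card_set_nth [::] bs (fun s => ranking s x y)).
by rewrite (card_set_nth [::] bs (fun s => ranking s y x)).
Qed.

Lemma margin_add_voter (V : finType) (P : V -> rel X) (b : rel X) x y :
  margin (add_voter P b) x y = margin P x y + (b x y)%:Z - (b y x)%:Z.
Proof. by rewrite /margin !card_set_option !PoszD; ring. Qed.

End Ballots.

Section Defeat.
Context {X V : finType} (P : V -> rel X).

Lemma mem_all_uniq_seqs (p : seq X) : uniq p -> p \in undup (all_uniq_seqs X).
Proof.
move=> p_uniq; rewrite mem_undup; apply/flattenP.
exists (permutations (enum [set z in p])); first by apply: map_f; rewrite mem_enum.
rewrite mem_permutations uniq_perm ?enum_uniq // => z.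
by rewrite mem_enum inE.
Qed.

Lemma strength_is_le_Strength_is {a b p} :
  majority_path P a b p -> le_ext (strength_is P a p) (Strength_is P a b).
Proof.
move=> ab_p; apply: le_ext_bigmax (ab_p); apply: mem_all_uniq_seqs.
by case/and3P: ab_p => _ /andP[].
Qed.

Lemma Strength_is_ge0 a b : le_ext (Some 0) (Strength_is P a b).
Proof.
rewrite /Strength_is; elim/big_rec: _ => // p s _ ge0_s.
exact: le_ext_trans ge0_s (le_ext_maxr _ _).
Qed.

Lemma Strength_is_no_out_edge a b : a != b ->
  (forall z, ~~ (0 < margin P a z)) -> Strength_is P a b = Some 0.
Proof.
move=> neq_ab no_out; rewrite /Strength_is big_pred0 // => -[|z p].
  by rewrite /majority_path /= (negbTE neq_ab) ?andbF.
by rewrite /majority_path /= (negbTE (no_out z)).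
Qed.

Lemma isc_margin_gt0 x y : isc P x y -> 0 < margin P x y.
Proof.
rewrite /isc; move: (Strength_is_ge0 y x).
by case: Strength_is => [k|] //= /le_lt_trans; apply.
Qed.

Lemma not_isc_path x y p : majority_path P y x p ->
  le_ext (Some (margin P x y)) (strength_is P y p) -> ~ isc P x y.
Proof.
move=> yx_p le_m; rewrite /isc gt_extE; apply/negP; rewrite negbK.
exact: le_ext_trans le_m (strength_is_le_Strength_is yx_p).
Qed.

Lemma isc_no_out_edge x y :
  (forall z, ~~ (0 < margin P y z)) -> 0 < margin P x y -> isc P x y.
Proof.
move=> no_out m_gt0; rewrite /isc Strength_is_no_out_edge //.
by apply: contraTneq m_gt0 => ->; rewrite /margin subrr ltxx.
Qed.

Lemma sc_of_out_margins x y : 0 < margin P x y ->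
  (forall z, 0 < margin P y z -> margin P y z < margin P x y) -> sc P x y.
Proof.
move=> m_gt0 out_lt; split=> // -[|z p] yx_p.
  move: m_gt0; case/and3P: yx_p => _ _ /eqP /= <-.
  by rewrite /margin subrr ltxx.
apply: gt_ext_le_lt (out_lt z _); first exact: min_ext_le_head.
by case/and3P: yx_p => /andP[].
Qed.

End Defeat.

Definition a : 'I_3 := @Ordinal 3 0 isT.
Definition b : 'I_3 := @Ordinal 3 1 isT.
Definition c : 'I_3 := @Ordinal 3 2 isT.

Lemma forall_ord3 (Q : 'I_3 -> Prop) : Q a -> Q b -> Q c -> forall z, Q z.
Proof. by move=> Qa Qb Qc [[|[|[|n]]] lt_n3] //; rewrite (bool_irrelevance lt_n3 isT). Qed.

Definition ballots : seq (seq 'I_3) :=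
  [:: [:: b; a; c]; [:: b; a; c]; [:: a; c; b]; [:: a; c; b]; [:: a; c; b];
      [:: c; b; a]; [:: c; b; a]].

Definition P := profile_of ballots.
Definition new_ballot := ranking [:: a; b; c].
Definition P' := add_voter P new_ballot.

Lemma margin_P x y : margin P x y = ballot_margin ballots x y.
Proof. exact: margin_profile_of. Qed.

Lemma margin_P' x y :
  margin P' x y = ballot_margin ballots x y + (new_ballot x y)%:Z - (new_ballot y x)%:Z.
Proof. by rewrite margin_add_voter margin_P. Qed.

Lemma profile_P : is_profile P.
Proof.
split; first by rewrite card_ord.
split; first by rewrite card_ord.
move=> v; apply: ranking_linear.
have all_in : all (fun s => all (mem s) [:: a; b; c]) ballots by [].
have /and4P[va vb vc _] := allP all_in _ (mem_nth [::] (ltn_ord v)).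
by apply: forall_ord3.
Qed.

Lemma sc_P_cb : sc P c b.
Proof.
apply: sc_of_out_margins; first by rewrite margin_P.
by apply: forall_ord3; rewrite !margin_P.
Qed.

Lemma not_isc_P_cb : ~ isc P c b.
Proof.
apply: (not_isc_path P c b [:: a; c]).
  by rewrite /majority_path /= !margin_P.
by rewrite /strength_is /= !margin_P.
Qed.

Lemma isc_P'_cb : isc P' c b.
Proof.
apply: isc_no_out_edge; last by rewrite margin_P'.
by apply: forall_ord3; rewrite margin_P'.
Qed.

Lemma ISC_P_b : ISC P b.
Proof.
apply: forall_ord3; [| | exact: not_isc_P_cb].
  by move/isc_margin_gt0; rewrite margin_P.
by move/isc_margin_gt0; rewrite margin_P.
Qed.

Lemma new_ballot_tolerant y : y != b -> ~ (0 < margin P b y) -> new_ballot b y.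
Proof. by move: y; apply: forall_ord3; rewrite // margin_P. Qed.

Theorem proposition8p8 :
  (* isc does not refine Split Cycle *)
  (exists (X V : finType) (P : V -> rel X), is_profile P /\
     exists x y : X, sc P x y /\ ~ isc P x y) /\
  (* isc fails Positive Involvement in Defeat *)
  (exists (X V : finType) (P : V -> rel X) (b : rel X) (x y : X),
     [/\ is_profile P, is_linear b, ~ isc P x y, b y x & isc (add_voter P b) x y]) /\
  (* ISC fails Tolerant Positive Involvement *)
  (exists (X V : finType) (P : V -> rel X) (b : rel X) (x : X),
     [/\ is_profile P, is_linear b, ISC P x,
         (forall y, y != x -> ~ (0 < margin P x y) -> b x y)
       & ~ ISC (add_voter P b) x]).
Proof.
have new_ballot_linear : is_linear new_ballot by apply: ranking_linear; apply: forall_ord3.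
split; [|split].
- exists 'I_3, 'I_7, P; split; first exact: profile_P.
  by exists c, b; split; [exact: sc_P_cb | exact: not_isc_P_cb].
- exists 'I_3, 'I_7, P, new_ballot, c, b; split=> //.
  + exact: profile_P.
  + exact: not_isc_P_cb.
  + exact: isc_P'_cb.
- exists 'I_3, 'I_7, P, new_ballot, b; split=> //.
  + exact: profile_P.
  + exact: ISC_P_b.
  + exact: new_ballot_tolerant.
  + by move/(_ c); apply; exact: isc_P'_cb.
Qed.
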